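(* Let $U$ be a finite set and let $f:2^U\to\mathbb{R}$ be non-decreasing and $\varepsilon$-approximately submodular for some $\varepsilon\ge 0$. Let $S\subseteq U$ satisfy: (i) $S$ is a Greedy Maximum Differential Set of $f$ (with respect to the ordering $s_1,\dots,s_{|S|}$); (ii) $f(S)=f_{\max}$; (iii) $\delta_{\min}>0$. Then for every set $C\subseteq U$ with $f(C)=f_{\max}$, $$|S|<\Big(1+\frac{\varepsilon}{\delta_{\min}}+\ln\Big(\frac{\delta_{\max}}{\delta_{\min}}\Big)\Big)\cdot|C|+1 .$$
   Context: For $f:2^U\to\mathbb{R}$, $A\subseteq U$ and $x\in U$, write $\Delta_x f(A)=f(A\cup\{x\})-f(A)$, and $f_{\max}=\max_{X\subseteq U} f(X)$. $f$ is non-decreasing if $A\subseteq B$ implies $f(A)\le f(B)$. $f$ is $\varepsilon$-approximately submodular ($\varepsilon\in[0,\infty)$) if for all $A\subseteq B\subseteq U$ and $x\in U\setminus B$, $\Delta_x f(B)\le \Delta_x f(A)+\varepsilon$. A set $S\subseteq U$ is a Greedy Maximum Differential Set of $f$ if its elements can be ordered $s_1,\dots,s_{|S|}$ such that, with $S_0=\emptyset$ and $S_i=\{s_1,\dots,s_i\}$, for every $i$ we have $\Delta_{s_i}f(S_{i-1})\ge \Delta_u f(S_{i-1})$ for all $u\in U$. For such an ordered $S$: $\delta_{\max}=\Delta_{s_1}f(\emptyset)=\max_{x\in U}\Delta_x f(\emptyset)$ and $\delta_{\min}=\min_{1\le i\le |S|}\Delta_{s_i}f(S_{i-1})$. *)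

From HB Require Import structures.
From mathcomp Require Import all_boot all_order all_algebra.
From mathcomp Require Import reals exp.
Set Implicit Arguments. Unset Strict Implicit. Unset Printing Implicit Defensive.
Import Order.TTheory GRing.Theory Num.Theory.
Local Open Scope ring_scope.

Section Defs.
Variables (R : realType) (U : finType).

Definition Delta (f : {set U} -> R) (x : U) (A : {set U}) : R :=
  f (x |: A) - f A.

Definition nondecreasing_set (f : {set U} -> R) : Prop :=
  forall A B : {set U}, A \subset B -> f A <= f B.

Definition approx_submodular (eps : R) (f : {set U} -> R) : Prop :=
  forall (A B : {set U}) (x : U), A \subset B -> x \notin B ->
    Delta f x B <= Delta f x A + eps.

Definition attains_fmax (f : {set U} -> R) (X : {set U}) : Prop :=
  forall Y : {set U}, f Y <= f X.

Definition prefix_set (s : seq U) (i : nat) : {set U} := [set x in take i s].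

(* s (a duplicate-free ordering of S) witnesses that S is a Greedy Maximum
   Differential Set of f *)
Definition greedy_ordering (f : {set U} -> R) (S : {set U}) (s : seq U) : Prop :=
  [/\ uniq s, S = [set x in s] &
      forall (i : nat) (x0 : U), (i < size s)%N -> forall u : U,
        Delta f u (prefix_set s i) <= Delta f (nth x0 s i) (prefix_set s i)].

(* the gain of the i-th greedy step (0-based): Delta_{s_{i+1}} f(S_i) *)
Definition greedy_gain (f : {set U} -> R) (s : seq U) (x0 : U) (i : nat) : R :=
  Delta f (nth x0 s i) (prefix_set s i).

Definition is_delta_max (f : {set U} -> R) (d : R) : Prop :=
  (exists x : U, d = Delta f x set0) /\ (forall x : U, Delta f x set0 <= d).

Definition is_delta_min (f : {set U} -> R) (s : seq U) (d : R) : Prop :=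
  (exists2 i, (i < size s)%N & forall x0 : U, d = greedy_gain f s x0 i) /\
  (forall (i : nat) (x0 : U), (i < size s)%N -> d <= greedy_gain f s x0 i).

End Defs.

(* The residual r_i := f(C) - f(S_i) of the greedy run is bounded through approximate
   submodularity by |C| times (greedy gain + eps), since the |C| elements of C added to S_i
   gain at most that much each. Hence the excess r_i - |C| eps shrinks by a factor
   1 - 1/|C| <= exp(-1/|C|) per step, starting below |C| delta_max, so after fewer than
   |C| ln(delta_max/delta_min) + 1 steps the residual drops to |C| (delta_min + eps).
   From then on every step removes at least delta_min of a residual that ends at 0, which
   allows at most |C| (1 + eps/delta_min) further steps. *)
From HB Require Import structures.
From mathcomp Require Import all_boot all_order all_algebra.
From mathcomp Require Import reals exp.
From mathcomp Require Import sequences ring lra.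
Import Order.TTheory GRing.Theory Num.Theory.
Local Open Scope ring_scope.
Set Implicit Arguments. Unset Strict Implicit.

Section ResidualDecay.
(* An abstract greedy run of length k: [r i] plays f(C) - f(S_i), [g i] the i-th gain, c is |C|. *)
Variables (R : realType) (k : nat) (r g : nat -> R) (c eps dmin dmax : R).
Hypothesis k_gt0 : (0 < k)%N.
Hypothesis r_step : forall {i}, (i < k)%N -> r i.+1 = r i - g i.
Hypothesis r_k : r k = 0.
Hypothesis gain_ge : forall {i}, (i < k)%N -> dmin <= g i.
Hypothesis gain0_le : g 0%N <= dmax.
Hypothesis residual_le : forall {i}, (i < k)%N -> r i <= c * (g i + eps).
Hypothesis dmin_gt0 : 0 < dmin.
Hypothesis eps_ge0 : 0 <= eps.
Hypothesis c_ge1 : 1 <= c.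

Let c_gt0 : 0 < c. Proof. exact: lt_le_trans ltr01 c_ge1. Qed.

Let dmin_le_dmax : dmin <= dmax. Proof. exact: le_trans (gain_ge k_gt0) gain0_le. Qed.

Let dmax_gt0 : 0 < dmax. Proof. exact: lt_le_trans dmin_gt0 dmin_le_dmax. Qed.

Lemma residual_drop j m : (m + j <= k)%N -> j%:R * dmin <= r m - r (m + j).
Proof.
elim: j => [|j IH] in m *; first by rewrite mul0r addn0 subrr.
rewrite addnS => hmj; have := IH m (ltnW hmj); have := gain_ge hmj.
rewrite (r_step hmj) -natr1 mulrDl mul1r; lra.
Qed.

Lemma excess_step i : (i < k)%N ->
  r i.+1 - c * eps <= (r i - c * eps) * (1 - c^-1).
Proof.
move=> ik; have gain_lb : (r i - c * eps) / c <= g i.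
  by rewrite ler_pdivrMr // mulrC; have := residual_le ik; lra.
by rewrite (r_step ik) mulrBr mulr1; lra.
Qed.

Lemma excess_decay i : (i < k)%N ->
  r i - c * eps <= c * dmax * expR (- (i%:R / c)).
Proof.
elim: i => [_|i IH ik].
  rewrite mul0r oppr0 expR0 mulr1.
  have : c * g 0%N <= c * dmax by rewrite ler_wpM2l // ltW.
  by have := residual_le k_gt0; lra.
set X := c * dmax * expR (- (i%:R / c)) in IH.
have shrink_ge0 : 0 <= 1 - c^-1 by rewrite subr_ge0 invf_le1.
have : (r i - c * eps) * (1 - c^-1) <= X * (1 - c^-1).
  by rewrite ler_wpM2r // IH // ltnW.
have : X * (1 - c^-1) <= X * expR (- c^-1).
  rewrite ler_wpM2l ?mulr_ge0 ?expR_ge0 ?(ltW c_gt0) ?(ltW dmax_gt0) //.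
  by rewrite -[1 - _]/(1 + - c^-1) expR_ge1Dx.
have -> : c * dmax * expR (- (i.+1%:R / c)) = X * expR (- c^-1).
  by rewrite /X -natr1 mulrDl mul1r opprD expRD mulrA.
by have := excess_step (ltnW ik); lra.
Qed.

Lemma large_residual_index i : (i < k)%N -> c * (dmin + eps) < r i ->
  i%:R < c * ln (dmax / dmin).
Proof.
move=> ik ri_gt.
have : dmin < dmax * expR (- (i%:R / c)).
  by rewrite -(ltr_pM2l c_gt0) mulrA; have := excess_decay ik; lra.
rewrite expRN ltr_pdivlMr ?expR_gt0 // => lt_dmax.
have : ln (dmin * expR (i%:R / c)) < ln dmax.
  by rewrite ltr_ln // posrE mulr_gt0 ?expR_gt0.
rewrite lnM ?posrE ?expR_gt0 // expRK => ln_lt.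
rewrite -ltr_pdivrMl // lnM ?posrE ?invr_gt0 // lnV ?posrE //; lra.
Qed.

Lemma tail_length m : (m <= k)%N -> r m <= c * (dmin + eps) ->
  k%:R - m%:R <= c + c * (eps / dmin).
Proof.
move=> mk rm; have := @residual_drop (k - m) m.
rewrite subnKC // r_k subr0 natrB // => /(_ (leqnn k)) drop_le.
have -> : c + c * (eps / dmin) = c * (dmin + eps) / dmin by field; rewrite gt_eqF.
by rewrite ler_pdivlMr //; lra.
Qed.

Lemma greedy_run_length_lt :
  k%:R < c + c * (eps / dmin) + c * ln (dmax / dmin) + 1.
Proof.
have small_residual : exists m, (m <= k)%N && (r m <= c * (dmin + eps)).
  by exists k; rewrite leqnn r_k mulr_ge0 ?addr_ge0 ?(ltW c_gt0) ?(ltW dmin_gt0).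
case: (ex_minnP small_residual) => m /andP[mk rm] m_min.
have := tail_length mk rm.
suff : m%:R < c * ln (dmax / dmin) + 1 by lra.
case: m mk {rm} m_min => [_ _|i ik i_min].
  have : 0 <= c * ln (dmax / dmin).
    by rewrite mulr_ge0 ?ln_ge0 ?(ltW c_gt0) // ler_pdivlMr // mul1r.
  lra.
have : c * (dmin + eps) < r i.
  rewrite ltNge; apply/negP => ri.
  by have := i_min i; rewrite (ltnW ik) ri ltnn => /(_ isT).
by move/(large_residual_index ik); rewrite -natr1; lra.
Qed.

End ResidualDecay.

Section GreedyResidual.
Variables (R : realType) (U : finType).
Implicit Types (f : {set U} -> R) (s : seq U) (A B C : {set U}).

Lemma prefix_set0 s : prefix_set s 0 = set0.
Proof. by apply/setP=> y; rewrite !inE take0. Qed.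

Lemma prefix_setS s i x0 : (i < size s)%N ->
  prefix_set s i.+1 = nth x0 s i |: prefix_set s i.
Proof.
move=> hi; rewrite /prefix_set (take_nth x0 hi).
by apply/setP=> y; rewrite !inE mem_rcons in_cons.
Qed.

Lemma prefix_set_size s : prefix_set s (size s) = [set x in s].
Proof. by rewrite /prefix_set take_size. Qed.

Lemma Delta_ge0 f x A : nondecreasing_set f -> 0 <= Delta f x A.
Proof. by move=> mono; rewrite subr_ge0 mono // subsetUr. Qed.

Lemma approx_submodular_union_le f eps A B (g : R) :
  approx_submodular eps f -> 0 <= g + eps -> (forall u, Delta f u A <= g) ->
  f (A :|: B) - f A <= #|B|%:R * (g + eps).
Proof.
move=> sub geps_ge0 gain_le; rewrite cardE -{1}[B]set_enum.
elim: (enum B) => [|x l IH].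
  have -> : [set y in [::]] = set0 :> {set U} by apply/setP => y; rewrite !inE.
  by rewrite setU0 subrr mul0r.
have -> : A :|: [set y in x :: l] = x |: (A :|: [set y in l]).
  by apply/setP=> y; rewrite !inE; case: (y == x); rewrite ?orbT.
set A' := A :|: [set y in l].
have : f (x |: A') - f A' <= g + eps.
  have [xA'|xA'] := boolP (x \in A'); first by rewrite (setUidPr _) ?sub1set // subrr.
  by have := sub A A' x (subsetUl _ _) xA'; have := gain_le x; rewrite /Delta; lra.
by rewrite /= -natr1 mulrDl mul1r; lra.
Qed.

Lemma greedy_residual_le f eps S s x0 i C :
  nondecreasing_set f -> approx_submodular eps f -> 0 <= eps ->
  greedy_ordering f S s -> (i < size s)%N ->
  f C - f (prefix_set s i) <= #|C|%:R * (greedy_gain f s x0 i + eps).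
Proof.
move=> mono sub eps_ge0 [_ _ greedy] ik.
have : f C <= f (prefix_set s i :|: C) by rewrite mono // subsetUr.
have gain_eps_ge0 := addr_ge0 (Delta_ge0 (nth x0 s i) (prefix_set s i) mono) eps_ge0.
have := approx_submodular_union_le C sub gain_eps_ge0 (greedy i x0 ik).
by rewrite /greedy_gain; lra.
Qed.

Lemma maximizer_neq0 f C x : attains_fmax f C -> 0 < Delta f x set0 -> C != set0.
Proof.
move=> Cmax gain_gt0; apply/eqP => C0.
by have := Cmax (x |: set0); rewrite C0; move: gain_gt0; rewrite /Delta; lra.
Qed.

End GreedyResidual.

Theorem mainTheorem1 (R : realType) (U : finType) (f : {set U} -> R) (eps : R)
  (S : {set U}) (s : seq U) (dmin dmax : R) :
  0 <= eps ->
  nondecreasing_set f ->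
  approx_submodular eps f ->
  greedy_ordering f S s ->
  attains_fmax f S ->
  is_delta_min f s dmin ->
  is_delta_max f dmax ->
  0 < dmin ->
  forall C : {set U}, attains_fmax f C ->
    (#|S|%:R : R) < (1 + eps / dmin + ln (dmax / dmin)) * #|C|%:R + 1.
Proof.
move=> eps_ge0 mono sub greedy Smax [[i0 i0_lt _] dmin_le] [_ dmax_ge] dmin_gt0 C Cmax.
have [uniq_s defS _] := greedy.
have x0 : U by case: (s) i0_lt => [|x ?].
have k_gt0 : (0 < size s)%N by apply: leq_ltn_trans i0_lt.
pose r i := f C - f (prefix_set s i).
have gain0_le : greedy_gain f s x0 0%N <= dmax.
  by have := dmax_ge (nth x0 s 0%N); rewrite /greedy_gain prefix_set0.
have C_neq0 : C != set0.
  apply: (maximizer_neq0 (x := nth x0 s 0%N) Cmax).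
  by have := dmin_le 0%N x0 k_gt0; rewrite /greedy_gain prefix_set0; lra.
have -> : #|S| = size s by rewrite defS cardsE; apply/card_uniqP.
have -> : (1 + eps / dmin + ln (dmax / dmin)) * #|C|%:R =
    #|C|%:R + #|C|%:R * (eps / dmin) + #|C|%:R * ln (dmax / dmin) by ring.
apply: (@greedy_run_length_lt R (size s) r (greedy_gain f s x0)) => //; rewrite /r.
- by move=> i ik; rewrite (prefix_setS x0 ik) /greedy_gain /Delta; lra.
- by rewrite prefix_set_size -defS; apply/eqP; rewrite subr_eq0 eq_le Smax Cmax.
- by move=> i; apply: dmin_le.
- by move=> i ik; exact: (greedy_residual_le x0 C mono sub eps_ge0 greedy ik).
- by rewrite ler1n card_gt0.
Qed.
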